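(* Let $m\in\mathbb{N}$. If $S\subseteq\mathbb{N}^{\mathbb{N}}$ is in $\mathbf{\Delta}'_{m+2}$, then $S$ is $m$th-order guessable.
   Context: Baire space $\mathbb{N}^{\mathbb{N}}$ carries the product of discrete topologies; $\mathbf{\Sigma}^0_n,\mathbf{\Pi}^0_n,\mathbf{\Delta}^0_n$ are the boldface Borel pointclasses. Definition: $\mathbf{\Delta}'_2=\mathbf{\Delta}^0_2$; for $k>2$, $S\in\mathbf{\Delta}'_k$ iff $S$ is a countable union of countable intersections of $\mathbf{\Delta}^0_{k-2}$ sets and also a countable intersection of countable unions of $\mathbf{\Delta}^0_{k-2}$ sets. The language $\mathscr{L}_{\max}$ is the first-order language (with equality) having: a constant symbol $\overline{n}$ for each $n\in\mathbb{N}$; an $n$-ary function symbol $\tilde w$ for each $w:\mathbb{N}^n\to\mathbb{N}$; an $n$-ary predicate symbol $\tilde p$ for each $p\subseteq\mathbb{N}^n$; a special unary function symbol $\mathbf{f}$; and, for every $n$ and every $G:\mathbb{N}^n\times\mathbb{N}^{<\mathbb{N}}\to\mathbb{N}$, an $(n+1)$-ary function symbol $G\circ\mathbf{f}$. For $f\in\mathbb{N}^{\mathbb{N}}$, $\mathscr{M}_f$ is the structure with universe $\mathbb{N}$ interpreting $\overline n$ as $n$, $\tilde w$ as $w$, $\tilde p$ as $p$, $\mathbf f$ as $f$, and $G\circ\mathbf f$ as $(m_1,\dots,m_n,m)\mapsto G(m_1,\dots,m_n,f(0),\dots,f(m))$. For a sentence $\phi$, $f(\phi)=1$ if $\mathscr{M}_f\models\phi$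 and $f(\phi)=0$ otherwise. Formula classes: ''quantifier-free'' means containing no quantifiers at all (not even bounded ones). $\Sigma_0=\Pi_0=\Delta_0$ is the set of quantifier-free formulas; $\Sigma_{n+1}=\{\exists x\,\phi:\phi\in\Pi_n\}$ and $\Pi_{n+1}=\{\forall x\,\phi:\phi\in\Sigma_n\}$; a formula is $\Delta_{n+1}$ if it is equivalent, in every structure $\mathscr{M}_f$ ($f\in\mathbb{N}^{\mathbb{N}}$), to some $\Sigma_{n+1}$ formula of $\mathscr{L}_{\max}$ and also to some $\Pi_{n+1}$ formula of $\mathscr{L}_{\max}$. For a set $\Sigma$ of symbols of $\mathscr{L}_{\max}$, a sentence ''of $\mathscr{L}_{\max}\cap\Sigma$'' is an $\mathscr{L}_{\max}$-sentence all of whose non-logical symbols lie in $\Sigma$. Definition ($m$th-order guessable): $S\subseteq\mathbb{N}^{\mathbb{N}}$ is $m$th-order guessable if there exist a countable set $\Sigma$ of $\mathscr{L}_{\max}$-symbols, a listing $\phi_0,\phi_1,\dots$ of all $\Delta_m$ sentences of $\mathscr{L}_{\max}\cap\Sigma$, and a function $G:\{0,1\}^{<\mathbb{N}}\to\mathbb{N}$ such that for every $f:\mathbb{N}\to\mathbb{N}$, $\lim_{n\to\infty}G(f(\phi_0),\dots,f(\phi_n))$ equals $1$ if $f\in S$ and $0$ if $f\notin S$. *)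

From Stdlib Require Import List Fin.

Definition baire := nat -> nat.
Definition bset := baire -> Prop.

Definition compl (S : bset) : bset := fun x => ~ S x.

(* open in the product of discrete topologies *)
Definition bopen (S : bset) : Prop :=
  forall f, S f -> exists n, forall g, (forall i, i < n -> g i = f i) -> S g.

(* SigAux n = boldface Sigma^0_(n+1) *)
Fixpoint SigAux (n : nat) (S : bset) : Prop :=
  match n with
  | 0 => bopen S
  | Datatypes.S n' =>
      exists A : nat -> bset,
        (forall i, SigAux n' (compl (A i))) /\
        (forall x, S x <-> exists i, A i x)
  end.

(* Boldface Sigma^0_n, Pi^0_n, Delta^0_n, for n >= 1 (only used with n >= 1) *)
Definition BSigma (n : nat) (S : bset) : Prop := SigAux (n - 1) S.
Definition BPi (n : nat) (S : bset) : Prop := BSigma n (compl S).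
Definition BDelta (n : nat) (S : bset) : Prop := BSigma n S /\ BPi n S.

Definition DeltaPrime (k : nat) (S : bset) : Prop :=
  match k with
  | 0 | 1 => False
  | 2 => BDelta 2 S
  | _ =>
      (exists A : nat -> nat -> bset,
          (forall i j, BDelta (k - 2) (A i j)) /\
          (forall x, S x <-> exists i, forall j, A i j x)) /\
      (exists B : nat -> nat -> bset,
          (forall i j, BDelta (k - 2) (B i j)) /\
          (forall x, S x <-> forall i, exists j, B i j x))
  end.

(* N^k is represented as Fin.t k -> nat; N^{<N} as list nat. *)
Inductive symbol : Type :=
| SymConst (c : nat)
| SymFun (k : nat) (w : (Fin.t k -> nat) -> nat)
| SymPred (k : nat) (p : (Fin.t k -> nat) -> Prop)
| SymF
| SymG (k : nat) (G : (Fin.t k -> nat) -> list nat -> nat). (* G o f, arity k+1 *)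

Inductive term : Type :=
| TVar (x : nat)
| TConst (c : nat)
| TFun (k : nat) (w : (Fin.t k -> nat) -> nat) (args : Fin.t k -> term)
| TF (t : term)
| TG (k : nat) (G : (Fin.t k -> nat) -> list nat -> nat)
     (args : Fin.t k -> term) (t : term).

Inductive formula : Type :=
| FEq (t1 t2 : term)
| FPred (k : nat) (p : (Fin.t k -> nat) -> Prop) (args : Fin.t k -> term)
| FNot (A : formula)
| FAnd (A B : formula)
| FOr (A B : formula)
| FImp (A B : formula)
| FEx (x : nat) (A : formula)
| FAll (x : nat) (A : formula).

Fixpoint eval (f : baire) (env : nat -> nat) (t : term) : nat :=
  match t with
  | TVar x => env x
  | TConst c => c
  | TFun k w args => w (fun i => eval f env (args i))
  | TF t => f (eval f env t)
  | TG k G args t =>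
      G (fun i => eval f env (args i)) (map f (seq 0 (Datatypes.S (eval f env t))))
  end.

Definition upd (env : nat -> nat) (x v : nat) : nat -> nat :=
  fun y => if Nat.eqb y x then v else env y.

Fixpoint sat (f : baire) (env : nat -> nat) (A : formula) : Prop :=
  match A with
  | FEq t1 t2 => eval f env t1 = eval f env t2
  | FPred k p args => p (fun i => eval f env (args i))
  | FNot A => ~ sat f env A
  | FAnd A B => sat f env A /\ sat f env B
  | FOr A B => sat f env A \/ sat f env B
  | FImp A B => sat f env A -> sat f env B
  | FEx x A => exists v, sat f (upd env x v) A
  | FAll x A => forall v, sat f (upd env x v) A
  end.

(* M_f |= phi, for a sentence phi (the environment is irrelevant) *)
Definition models (f : baire) (A : formula) : Prop := sat f (fun _ => 0) A.

Fixpoint var_in_term (x : nat) (t : term) : Prop :=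
  match t with
  | TVar y => y = x
  | TConst _ => False
  | TFun k w args => exists i, var_in_term x (args i)
  | TF t => var_in_term x t
  | TG k G args t => (exists i, var_in_term x (args i)) \/ var_in_term x t
  end.

Fixpoint free_in (x : nat) (A : formula) : Prop :=
  match A with
  | FEq t1 t2 => var_in_term x t1 \/ var_in_term x t2
  | FPred k p args => exists i, var_in_term x (args i)
  | FNot A => free_in x A
  | FAnd A B | FOr A B | FImp A B => free_in x A \/ free_in x B
  | FEx y A | FAll y A => y <> x /\ free_in x A
  end.

Definition sentence (A : formula) : Prop := forall x, ~ free_in x A.

Fixpoint term_in (Sg : symbol -> Prop) (t : term) : Prop :=
  match t with
  | TVar _ => True
  | TConst c => Sg (SymConst c)
  | TFun k w args => Sg (SymFun k w) /\ forall i, term_in Sg (args i)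
  | TF t => Sg SymF /\ term_in Sg t
  | TG k G args t => Sg (SymG k G) /\ (forall i, term_in Sg (args i)) /\ term_in Sg t
  end.

Fixpoint formula_in (Sg : symbol -> Prop) (A : formula) : Prop :=
  match A with
  | FEq t1 t2 => term_in Sg t1 /\ term_in Sg t2
  | FPred k p args => Sg (SymPred k p) /\ forall i, term_in Sg (args i)
  | FNot A => formula_in Sg A
  | FAnd A B | FOr A B | FImp A B => formula_in Sg A /\ formula_in Sg B
  | FEx _ A | FAll _ A => formula_in Sg A
  end.

Fixpoint qfree (A : formula) : Prop :=
  match A with
  | FEq _ _ | FPred _ _ _ => True
  | FNot A => qfree A
  | FAnd A B | FOr A B | FImp A B => qfree A /\ qfree B
  | FEx _ _ | FAll _ _ => False
  end.

(* Sigma_n and Pi_n, literally as in the paper (one quantifier per level) *)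
Fixpoint SigmaF (n : nat) (A : formula) : Prop :=
  match n with
  | 0 => qfree A
  | Datatypes.S n' =>
      match A with
      | FEx _ B => PiF n' B
      | _ => False
      end
  end
with PiF (n : nat) (A : formula) : Prop :=
  match n with
  | 0 => qfree A
  | Datatypes.S n' =>
      match A with
      | FAll _ B => SigmaF n' B
      | _ => False
      end
  end.

Definition equiv_all (A B : formula) : Prop :=
  forall (f : baire) (env : nat -> nat), sat f env A <-> sat f env B.

Definition DeltaF (n : nat) (A : formula) : Prop :=
  match n with
  | 0 => qfree A
  | Datatypes.S _ =>
      (exists B, SigmaF n B /\ equiv_all A B) /\
      (exists B, PiF n B /\ equiv_all A B)
  end.

Definition countable_symset (Sg : symbol -> Prop) : Prop :=
  exists e : nat -> symbol, forall s, Sg s -> exists n, e n = s.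

Definition nat_limit (u : nat -> nat) (v : nat) : Prop :=
  exists N, forall n, N <= n -> u n = v.

Definition prefix_bits (b : nat -> bool) (n : nat) : list bool :=
  map b (seq 0 (Datatypes.S n)).

Definition guessable (m : nat) (S : bset) : Prop :=
  exists (Sg : symbol -> Prop) (phi : nat -> formula) (G : list bool -> nat),
    countable_symset Sg /\
    (forall n, DeltaF m (phi n) /\ sentence (phi n) /\ formula_in Sg (phi n)) /\
    (forall A, DeltaF m A -> sentence A -> formula_in Sg A ->
               exists n, phi n = A) /\
    (* b i encodes f(phi_i) : true = 1, false = 0 *)
    (forall (f : baire) (b : nat -> bool),
        (forall i, b i = true <-> models f (phi i)) ->
        (S f -> nat_limit (fun n => G (prefix_bits b n)) 1) /\
        (~ S f -> nat_limit (fun n => G (prefix_bits b n)) 0)).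

(* Both [X] and its complement are written as U_i n_j C s i j (s = 0 for [X], s = 1
   for the complement), where each set [C s i j] is defined by a Delta_m sentence of
   L_max.  Reading the truth values of all Delta_m sentences, the guesser looks for
   the least code c = s + 2i none of whose sentences has yet been seen false, and
   answers 1 iff s = 0; it stabilises on the least code that is never refuted
   ([guess_limit], [guessable_of_codes]).

   The sentences use only constants and one symbol G o f per arity:
   - for m = 0, [X] and its complement are unions of closed sets, and [C s i N] says
     that the cylinder of the prefix of length N+1 of f is not included in the open
     complement of the i-th closed set, a single negated atom ([guessable_Delta2]);
   - for m = n+1, the Delta^0_(n+1) sets [C s i j] are unfolded ([Rep]) into n+1
     alternating unions and complements down to basic open cylinders, which gives a
     prenex Sigma_(n+1) definition ([sigF]); the same construction for the complement
     gives the Pi_(n+1) definition ([guessable_DeltaPrime_succ]). *)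

From Stdlib Require Import List Cantor Wf_nat ClassicalEpsilon Classical
  FunctionalExtensionality Eqdep_dec Lia PeanoNat.
Import ListNotations.

(** * Finite prefixes, cylinders and open sets of Baire space *)

Definition prefix (f : baire) (k : nat) : list nat := map f (seq 0 k).

Lemma prefix_length (f : baire) (k : nat) : length (prefix f k) = k.
Proof. unfold prefix. rewrite length_map, length_seq. reflexivity. Qed.

Lemma prefix_nth (f : baire) (k i : nat) : i < k -> nth i (prefix f k) 0 = f i.
Proof.
  intros Hi. unfold prefix.
  rewrite nth_indep with (d' := f 0) by (rewrite length_map, length_seq; lia).
  rewrite map_nth, seq_nth by lia. reflexivity.
Qed.

Definition cyl (l : list nat) (X : bset) : Prop :=
  forall g, (forall i, i < length l -> g i = nth i l 0) -> X g.

Lemma cyl_prefix (f : baire) (k : nat) (X : bset) :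
  cyl (prefix f k) X <-> (forall g, (forall i, i < k -> g i = f i) -> X g).
Proof.
  unfold cyl. rewrite prefix_length.
  split; intros Hc g Hg; apply Hc; intros i Hi; rewrite Hg by exact Hi.
  - symmetry. apply prefix_nth, Hi.
  - apply prefix_nth, Hi.
Qed.

Lemma bopen_cyl (U : bset) (f : baire) :
  bopen U -> U f <-> exists N, cyl (prefix f (S N)) U.
Proof.
  intros HU. split.
  - intros Hf. destruct (HU f Hf) as [N HN]. exists N.
    apply cyl_prefix. intros g Hg. apply HN. intros i Hi. apply Hg. lia.
  - intros [N HN]. exact (proj1 (cyl_prefix f (S N) U) HN f (fun _ _ => eq_refl)).
Qed.

Lemma closed_cyl (X : bset) (f : baire) :
  bopen (compl X) -> X f <-> forall N, ~ cyl (prefix f (S N)) (compl X).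
Proof.
  intros HX. split.
  - intros Hf N Hc. exact (proj2 (bopen_cyl _ f HX) (ex_intro _ N Hc) Hf).
  - intros Hno. apply NNPP. intros Hf.
    destruct (proj1 (bopen_cyl _ f HX) Hf) as [N HN]. exact (Hno N HN).
Qed.

Lemma SigAux_ext (n : nat) (X Y : bset) :
  (forall x, X x <-> Y x) -> SigAux n X -> SigAux n Y.
Proof.
  destruct n as [|n]; simpl; intros E H.
  - intros f Hf. apply E in Hf. destruct (H f Hf) as [N HN].
    exists N. intros g Hg. apply E, HN, Hg.
  - destruct H as [A [HA HX]]. exists A. split; [exact HA|].
    intros x. rewrite <- E. apply HX.
Qed.

Lemma BDelta_succ (n : nat) (X : bset) :
  BDelta (S n) X -> SigAux n X /\ SigAux n (compl X).
Proof. unfold BDelta, BPi, BSigma. replace (S n - 1) with n by lia. auto. Qed.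

(* [Rep H n F] unfolds a family [F] of Sigma^0_(n+1) sets indexed by contexts (lists
   of parameters): [F ctx] is the union over [v] of the complements of [A ctx v], and
   these complements form the family indexed by the contexts [v :: ctx]; after [n]
   such steps the family consists of open sets, whose basic cylinders are decided
   by the single function [H]. *)
Fixpoint Rep (H : list nat -> list nat -> nat) (n : nat) (F : list nat -> bset) : Prop :=
  match n with
  | 0 => (forall ctx, bopen (F ctx)) /\ (forall ctx l, H ctx l = 1 <-> cyl l (F ctx))
  | S n' => exists A : list nat -> nat -> bset,
      (forall ctx x, F ctx x <-> exists v, A ctx v x) /\
      Rep H n' (fun ctx => compl (A (tl ctx) (hd 0 ctx)))
  end.

Lemma Rep_exists (n : nat) (F : list nat -> bset) :
  (forall ctx, SigAux n (F ctx)) -> exists H, Rep H n F.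
Proof.
  revert F. induction n as [|n IH]; intros F HF; simpl in HF |- *.
  - exists (fun ctx l => if excluded_middle_informative (cyl l (F ctx)) then 1 else 0).
    split; [exact HF|]. intros ctx l.
    destruct (excluded_middle_informative (cyl l (F ctx)));
      split; intros; auto; try discriminate; contradiction.
  - destruct (choice _ HF) as [A HA].
    destruct (IH (fun ctx => compl (A (tl ctx) (hd 0 ctx)))) as [H HH].
    + intros ctx. apply HA.
    + exists H, A. split; [|exact HH]. intros ctx x. apply HA.
Qed.

(** * Enumerating the formulas over constants and one [G o f] symbol per arity *)

Definition basic_symbols (Gg : forall k, (Fin.t k -> nat) -> list nat -> nat)
  (s : symbol) : Prop :=
  (exists c, s = SymConst c) \/ (exists k, s = SymG k (Gg k)).

Fixpoint decode_tuple (k n : nat) : Fin.t k -> nat :=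
  match k with
  | 0 => fun _ => 0
  | S k' => fun i =>
      let p := Cantor.of_nat n in
      Fin.caseS' i (fun _ => nat) (fst p) (decode_tuple k' (snd p))
  end.

Lemma decode_tuple_collect (k : nat) (P : Fin.t k -> nat -> nat -> Prop) :
  (forall i c d d', d <= d' -> P i c d -> P i c d') ->
  (forall i, exists c d, P i c d) -> exists n d, forall i, P i (decode_tuple k n i) d.
Proof.
  revert P. induction k as [|k IH]; intros P mono H.
  - exists 0, 0. intros i. apply Fin.case0. exact i.
  - destruct (H Fin.F1) as [c0 [d0 H0]].
    destruct (IH (fun i => P (Fin.FS i))) as [n' [d' H']].
    + intros; eapply mono; eauto.
    + intros i; apply H.
    + exists (Cantor.to_nat (c0, n')), (Nat.max d0 d').
      intros i. pattern i. apply Fin.caseS'; cbn [decode_tuple];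
        rewrite Cantor.cancel_of_to; simpl.
      * eapply mono; [|exact H0]. lia.
      * intros p. eapply mono; [|exact (H' p)]. lia.
Qed.

(* [dec d c] decodes the code [c] with recursion depth (fuel) [d]; [x] is decoded when
   some code yields it for all sufficiently large fuel. *)
Definition decodes {A : Type} (dec : nat -> nat -> A) (x : A) : Prop :=
  exists c d, forall d', d <= d' -> dec d' c = x.

Ltac unfold_code dec :=
  intros [|d'] Hd; [lia|]; cbn [dec]; repeat (rewrite Cantor.cancel_of_to; cbn [fst snd]).

(* Binary connectives and quantifiers, indexed so that the decoder treats them uniformly. *)
Definition connective (k : nat) : formula -> formula -> formula :=
  match k with 0 => FAnd | 1 => FOr | _ => FImp end.

Definition quantifier (k : nat) : nat -> formula -> formula :=
  match k with 0 => FEx | _ => FAll end.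

Section Enumeration.

Variable Gg : forall k, (Fin.t k -> nat) -> list nat -> nat.

Fixpoint decT (d n : nat) : term :=
  match d with
  | 0 => TConst 0
  | S d' =>
      match Cantor.of_nat n with
      | (0, c) => TVar c
      | (1, c) => TConst c
      | (_, r) =>
          let p := Cantor.of_nat r in
          let q := Cantor.of_nat (snd p) in
          TG (fst p) (Gg (fst p)) (fun i => decT d' (decode_tuple (fst p) (fst q) i))
             (decT d' (snd q))
      end
  end.

Lemma decT_surj (t : term) : term_in (basic_symbols Gg) t -> decodes decT t.
Proof.
  induction t as [x|c|k w args IH|t IH|k G args IH t IHt]; simpl; intros Ht.
  - exists (Cantor.to_nat (0, x)), 1. unfold_code decT. reflexivity.
  - exists (Cantor.to_nat (1, c)), 1. unfold_code decT. reflexivity.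
  - destruct Ht as [[[c' E]|[k' E]] _]; discriminate.
  - destruct Ht as [[[c' E]|[k' E]] _]; discriminate.
  - destruct Ht as [Hs [Hargs Ht]].
    assert (EG : G = Gg k).
    { destruct Hs as [[c E]|[k' E]]; [discriminate|].
      injection E as Ek EG. subst k'.
      exact (inj_pair2_eq_dec _ Nat.eq_dec _ _ _ _ EG). }
    subst G.
    destruct (decode_tuple_collect k (fun i c d => forall d', d <= d' -> decT d' c = args i))
      as [nv [da Hda]].
    + intros i c d d' Hle Hp d'' Hd''. apply Hp. lia.
    + intros i. apply IH, Hargs.
    + destruct (IHt Ht) as [ct [dt Hdt]].
      exists (Cantor.to_nat (2, Cantor.to_nat (k, Cantor.to_nat (nv, ct)))),
             (S (Nat.max da dt)).
      unfold_code decT. rewrite (Hdt d') by lia.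
      f_equal. apply functional_extensionality. intros i. apply Hda. lia.
Qed.

Fixpoint decF (d n : nat) : formula :=
  match d with
  | 0 => FEq (TConst 0) (TConst 0)
  | S d' =>
      let p := Cantor.of_nat n in
      let q := Cantor.of_nat (snd p) in
      let r := Cantor.of_nat (snd q) in
      match fst p with
      | 0 => FEq (decT d' (fst q)) (decT d' (snd q))
      | 1 => FNot (decF d' (snd p))
      | 2 => connective (fst q) (decF d' (fst r)) (decF d' (snd r))
      | _ => quantifier (fst q) (fst r) (decF d' (snd r))
      end
  end.

Lemma decodes_connective (k : nat) (A B : formula) :
  decodes decF A -> decodes decF B -> decodes decF (connective k A B).
Proof.
  intros [c1 [d1 E1]] [c2 [d2 E2]].
  exists (Cantor.to_nat (2, Cantor.to_nat (k, Cantor.to_nat (c1, c2)))),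
         (S (Nat.max d1 d2)).
  unfold_code decF. rewrite E1, E2 by lia. reflexivity.
Qed.

Lemma decodes_quantifier (k x : nat) (A : formula) :
  decodes decF A -> decodes decF (quantifier k x A).
Proof.
  intros [c [d E]].
  exists (Cantor.to_nat (3, Cantor.to_nat (k, Cantor.to_nat (x, c)))), (S d).
  unfold_code decF. rewrite E by lia. reflexivity.
Qed.

Lemma decF_surj (A : formula) : formula_in (basic_symbols Gg) A -> decodes decF A.
Proof.
  induction A as [t1 t2|k p args|A IH|A IHA B IHB|A IHA B IHB|A IHA B IHB|x A IH|x A IH];
    simpl; intros HA.
  - destruct (decT_surj t1 (proj1 HA)) as [c1 [d1 E1]].
    destruct (decT_surj t2 (proj2 HA)) as [c2 [d2 E2]].
    exists (Cantor.to_nat (0, Cantor.to_nat (c1, c2))), (S (Nat.max d1 d2)).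
    unfold_code decF. rewrite E1, E2 by lia. reflexivity.
  - destruct HA as [[[c' E]|[k' E]] _]; discriminate.
  - destruct (IH HA) as [c [d E]].
    exists (Cantor.to_nat (1, c)), (S d). unfold_code decF. rewrite E by lia. reflexivity.
  - exact (decodes_connective 0 A B (IHA (proj1 HA)) (IHB (proj2 HA))).
  - exact (decodes_connective 1 A B (IHA (proj1 HA)) (IHB (proj2 HA))).
  - exact (decodes_connective 2 A B (IHA (proj1 HA)) (IHB (proj2 HA))).
  - exact (decodes_quantifier 0 x A (IH HA)).
  - exact (decodes_quantifier 1 x A (IH HA)).
Qed.

Definition enum_formula (n : nat) : formula :=
  let p := Cantor.of_nat n in decF (fst p) (snd p).

Lemma enum_formula_surj (A : formula) :
  formula_in (basic_symbols Gg) A -> exists n, enum_formula n = A.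
Proof.
  intros HA. destruct (decF_surj A HA) as [c [d E]].
  exists (Cantor.to_nat (d, c)). unfold enum_formula.
  rewrite Cantor.cancel_of_to. cbn [fst snd]. apply E. lia.
Qed.

Lemma basic_symbols_countable : countable_symset (basic_symbols Gg).
Proof.
  exists (fun n => let p := Cantor.of_nat n in
            match fst p with 0 => SymConst (snd p) | _ => SymG (snd p) (Gg (snd p)) end).
  intros s [[c E]|[k E]]; subst.
  - exists (Cantor.to_nat (0, c)). rewrite Cantor.cancel_of_to. reflexivity.
  - exists (Cantor.to_nat (1, k)). rewrite Cantor.cancel_of_to. reflexivity.
Qed.

End Enumeration.

(** * Atoms [G o f (args, t) = 1] and the prenex formulas built on them *)

Fixpoint tuple_to_list (k : nat) : (Fin.t k -> nat) -> list nat :=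
  match k with
  | 0 => fun _ => []
  | S k' => fun v => v Fin.F1 :: tuple_to_list k' (fun i => v (Fin.FS i))
  end.

Definition Gfam (H : list nat -> list nat -> nat) (k : nat) (v : Fin.t k -> nat)
  (l : list nat) : nat := H (tuple_to_list k v) l.

Definition args_of_list (l : list term) : Fin.t (length l) -> term :=
  fun i => nth (proj1_sig (Fin.to_nat i)) l (TConst 0).

Lemma tuple_to_list_nat (k : nat) (g : nat -> nat) :
  tuple_to_list k (fun i => g (proj1_sig (Fin.to_nat i))) = map g (seq 0 k).
Proof.
  revert g. induction k as [|k IH]; intros g; [reflexivity|].
  simpl. f_equal. rewrite <- seq_shift, map_map, <- (IH (fun n => g (S n))).
  f_equal. apply functional_extensionality. intros i. simpl.
  destruct (Fin.to_nat i). reflexivity.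
Qed.

Lemma eval_args_of_list (f : baire) (env : nat -> nat) (l : list term) :
  tuple_to_list (length l) (fun i => eval f env (args_of_list l i)) = map (eval f env) l.
Proof.
  unfold args_of_list.
  rewrite (tuple_to_list_nat (length l) (fun n => eval f env (nth n l (TConst 0)))).
  clear. induction l as [|a l IH]; [reflexivity|].
  simpl. f_equal. rewrite <- seq_shift, map_map. exact IH.
Qed.

Definition atom (H : list nat -> list nat -> nat) (args : list term) (t : term) : formula :=
  FEq (TG (length args) (Gfam H (length args)) (args_of_list args) t) (TConst 1).

Lemma atom_sat (H : list nat -> list nat -> nat) (args : list term) (t : term)
  (f : baire) (env : nat -> nat) :
  sat f env (atom H args t) <->
  H (map (eval f env) args) (prefix f (S (eval f env t))) = 1.
Proof. unfold atom. cbn [sat eval]. unfold Gfam. rewrite eval_args_of_list. reflexivity. Qed.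

Definition simple_term (b : nat) (t : term) : Prop :=
  (exists y, y < b /\ t = TVar y) \/ (exists c, t = TConst c).

Lemma simple_term_mono (b b' : nat) (t : term) :
  b <= b' -> simple_term b t -> simple_term b' t.
Proof. intros Hb [[y [Hy E]]|Hc]; [left; exists y; split; [lia|exact E]|right; exact Hc]. Qed.

Lemma args_of_list_simple (b : nat) (l : list term) :
  (forall a, In a l -> simple_term b a) -> forall i, simple_term b (args_of_list l i).
Proof.
  intros Hl i. unfold args_of_list.
  destruct (nth_in_or_default (proj1_sig (Fin.to_nat i)) l (TConst 0)) as [Hin|E].
  - exact (Hl _ Hin).
  - rewrite E. right. exists 0. reflexivity.
Qed.

Lemma atom_free (H : list nat -> list nat -> nat) (b : nat) (args : list term) (t : term) :
  (forall a, In a args -> simple_term b a) -> simple_term b t ->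
  forall x, free_in x (atom H args t) -> x < b.
Proof.
  intros Hargs Ht x Hx.
  assert (Hsimple : forall u, simple_term b u -> var_in_term x u -> x < b)
    by (intros u [[y [Hy ->]]|[c ->]]; simpl; lia).
  unfold atom in Hx. cbn [free_in var_in_term] in Hx.
  destruct Hx as [[[i Hi]|Hi]|[]].
  - exact (Hsimple _ (args_of_list_simple b args Hargs i) Hi).
  - exact (Hsimple t Ht Hi).
Qed.

Lemma atom_in (H : list nat -> list nat -> nat) (b : nat) (args : list term) (t : term) :
  (forall a, In a args -> simple_term b a) -> simple_term b t ->
  formula_in (basic_symbols (Gfam H)) (atom H args t).
Proof.
  intros Hargs Ht.
  assert (Hsimple : forall u, simple_term b u -> term_in (basic_symbols (Gfam H)) u)
    by (intros u [[y [_ ->]]|[c ->]]; simpl; [exact I|left; exists c; reflexivity]).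
  unfold atom. simpl. split; [split; [right; exists (length args); reflexivity|split]|].
  - intros i. exact (Hsimple _ (args_of_list_simple b args Hargs i)).
  - exact (Hsimple t Ht).
  - left. exists 1. reflexivity.
Qed.

(* The context of a formula with [d] bound variables around it: the variables
   [d-1, ..., 0] (innermost first), followed by the fixed parameters [pre]. *)
Definition ctx_terms (d : nat) (pre : list nat) : list term :=
  rev (map TVar (seq 0 d)) ++ map TConst pre.

Definition ctx_values (env : nat -> nat) (d : nat) (pre : list nat) : list nat :=
  rev (map env (seq 0 d)) ++ pre.

Lemma ctx_terms_simple (d : nat) (pre : list nat) :
  forall a, In a (ctx_terms d pre) -> simple_term d a.
Proof.
  intros a Hin. unfold ctx_terms in Hin. apply in_app_or in Hin. destruct Hin as [Hin|Hin].
  - left. apply in_rev, in_map_iff in Hin. destruct Hin as [y [E Hy]].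
    apply in_seq in Hy. exists y. split; [lia|auto].
  - right. apply in_map_iff in Hin. destruct Hin as [c [E _]]. exists c. auto.
Qed.

Lemma eval_ctx_terms (f : baire) (env : nat -> nat) (d : nat) (pre : list nat) :
  map (eval f env) (ctx_terms d pre) = ctx_values env d pre.
Proof.
  unfold ctx_terms, ctx_values. rewrite map_app, map_rev, !map_map. simpl.
  rewrite map_id. reflexivity.
Qed.

Lemma ctx_values_upd (env : nat -> nat) (d v : nat) (pre : list nat) :
  ctx_values (upd env d v) d pre = ctx_values env d pre.
Proof.
  unfold ctx_values. f_equal. f_equal. apply map_ext_in. intros x Hx.
  apply in_seq in Hx. unfold upd. destruct (Nat.eqb_spec x d); [lia|reflexivity].
Qed.

Lemma ctx_values_push (env : nat -> nat) (d v : nat) (pre : list nat) :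
  ctx_values (upd env d v) (S d) pre = v :: ctx_values env d pre.
Proof.
  rewrite <- (ctx_values_upd env d v pre). unfold ctx_values.
  rewrite seq_S, map_app, rev_app_distr. simpl.
  unfold upd at 1. rewrite Nat.eqb_refl. reflexivity.
Qed.

Lemma atom_ctx_sat (H : list nat -> list nat -> nat) (d : nat) (pre : list nat)
  (f : baire) (env : nat -> nat) (v : nat) :
  sat f (upd env d v) (atom H (ctx_terms d pre) (TVar d)) <->
  H (ctx_values env d pre) (prefix f (S v)) = 1.
Proof.
  rewrite atom_sat, eval_ctx_terms, ctx_values_upd. simpl.
  unfold upd. rewrite Nat.eqb_refl. reflexivity.
Qed.

Fixpoint sigF (H : list nat -> list nat -> nat) (n d : nat) (pre : list nat) : formula :=
  match n with
  | 0 => FEx d (atom H (ctx_terms d pre) (TVar d))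
  | S n' => FEx d (piF H n' (S d) pre)
  end
with piF (H : list nat -> list nat -> nat) (n d : nat) (pre : list nat) : formula :=
  match n with
  | 0 => FAll d (FNot (atom H (ctx_terms d pre) (TVar d)))
  | S n' => FAll d (sigF H n' (S d) pre)
  end.

Lemma sigF_class (H : list nat -> list nat -> nat) (n : nat) :
  forall d pre, SigmaF (S n) (sigF H n d pre) /\ PiF (S n) (piF H n d pre).
Proof. induction n as [|n IH]; intros d pre; simpl; [split; exact I|split; apply IH]. Qed.

Lemma sigF_free (H : list nat -> list nat -> nat) (n : nat) :
  forall d pre x, (free_in x (sigF H n d pre) -> x < d) /\ (free_in x (piF H n d pre) -> x < d).
Proof.
  induction n as [|n IH]; intros d pre x; cbn [sigF piF free_in].
  - assert (Hatom : free_in x (atom H (ctx_terms d pre) (TVar d)) -> x < S d).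
    { apply atom_free.
      - intros a Ha. exact (simple_term_mono d (S d) a (Nat.le_succ_diag_r d)
                                              (ctx_terms_simple d pre a Ha)).
      - left. exists d. split; [lia|reflexivity]. }
    split; intros [Hne Hf]; apply Hatom in Hf; lia.
  - split; intros [Hne Hf]; [apply (IH (S d) pre x) in Hf|apply (IH (S d) pre x) in Hf]; lia.
Qed.

Lemma sigF_in (H : list nat -> list nat -> nat) (n : nat) :
  forall d pre, formula_in (basic_symbols (Gfam H)) (sigF H n d pre) /\
                formula_in (basic_symbols (Gfam H)) (piF H n d pre).
Proof.
  induction n as [|n IH]; intros d pre; simpl; [|split; apply IH].
  assert (Hatom : formula_in (basic_symbols (Gfam H)) (atom H (ctx_terms d pre) (TVar d))).
  { apply (atom_in H (S d)).
    - intros a Ha. exact (simple_term_mono d (S d) a (Nat.le_succ_diag_r d)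
                                            (ctx_terms_simple d pre a Ha)).
    - left. exists d. split; [lia|reflexivity]. }
  split; exact Hatom.
Qed.

Lemma sigF_sat (n : nat) : forall H F, Rep H n F -> forall d pre f env,
  (sat f env (sigF H n d pre) <-> F (ctx_values env d pre) f) /\
  (sat f env (piF H n d pre) <-> ~ F (ctx_values env d pre) f).
Proof.
  induction n as [|n IH]; intros H F HR d pre f env.
  - destruct HR as [Hopen Hcyl].
    assert (E : (exists v, sat f (upd env d v) (atom H (ctx_terms d pre) (TVar d))) <->
                F (ctx_values env d pre) f).
    { rewrite (bopen_cyl _ f (Hopen _)).
      split; intros [v Hv]; exists v.
      - apply Hcyl, atom_ctx_sat, Hv.
      - apply atom_ctx_sat, Hcyl, Hv. }
    simpl. split; [exact E|]. rewrite <- E. split.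
    + intros Hall [v Hv]. exact (Hall v Hv).
    + intros Hn v Hv. apply Hn. exists v. exact Hv.
  - destruct HR as [A [HA HR]]. simpl. rewrite HA.
    assert (Hstep : forall v,
      (sat f (upd env d v) (sigF H n (S d) pre) <-> ~ A (ctx_values env d pre) v f) /\
      (sat f (upd env d v) (piF H n (S d) pre) <-> A (ctx_values env d pre) v f)).
    { intros v. destruct (IH H _ HR (S d) pre f (upd env d v)) as [Hs Hp].
      rewrite Hs, Hp, ctx_values_push. simpl. unfold compl.
      split; [reflexivity|split; [apply NNPP|auto]]. }
    split.
    + split; intros [v Hv]; exists v; apply Hstep; exact Hv.
    + split.
      * intros Hall [v Hv]. exact (proj1 (proj1 (Hstep v)) (Hall v) Hv).
      * intros Hn v. apply Hstep. intros Hv. apply Hn. exists v. exact Hv.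
Qed.

(** * Guessing the first code that is never refuted *)

Lemma least_witness (P : nat -> Prop) :
  (exists n, P n) -> exists n, P n /\ forall m, m < n -> ~ P m.
Proof.
  intros Hex.
  destruct (dec_inh_nat_subset_has_unique_least_element P (fun n => classic (P n)) Hex)
    as [n [[Hn Hmin] _]].
  exists n. split; [exact Hn|]. intros m Hm Pm. specialize (Hmin m Pm). lia.
Qed.

Lemma common_bound (K : nat) (Q : nat -> nat -> Prop) :
  (forall c x y, x <= y -> Q c x -> Q c y) ->
  (forall c, c < K -> exists x, Q c x) -> exists N, forall c, c < K -> Q c N.
Proof.
  intros mono. induction K as [|K IH]; intros H.
  - exists 0. intros; lia.
  - destruct IH as [N HN]. { intros c Hc. apply H. lia. }
    destruct (H K) as [x Hx]; [lia|].
    exists (Nat.max N x). intros c Hc.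
    destruct (Nat.eq_dec c K) as [->|Hne].
    + eapply mono; [|exact Hx]. lia.
    + eapply mono; [|apply HN; lia]. lia.
Qed.

Lemma find_seq_least (p : nat -> bool) (L a c : nat) :
  a <= c < a + L -> (forall c', a <= c' < c -> p c' = false) -> p c = true ->
  find p (seq a L) = Some c.
Proof.
  revert a. induction L as [|L IH]; intros a Ha Hlt Hc; [lia|].
  simpl. destruct (Nat.eq_dec a c) as [->|Hne]; [rewrite Hc; reflexivity|].
  rewrite Hlt by lia. apply IH; [lia| |exact Hc]. intros c' Hc'. apply Hlt. lia.
Qed.

Lemma prefix_bits_length (b : nat -> bool) (n : nat) : length (prefix_bits b n) = S n.
Proof. unfold prefix_bits. rewrite length_map, length_seq. reflexivity. Qed.

Lemma prefix_bits_nth_error (b : nat -> bool) (n k : nat) :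
  k <= n -> nth_error (prefix_bits b n) k = Some (b k).
Proof.
  intros Hk. unfold prefix_bits. rewrite nth_error_map, nth_error_seq.
  destruct (Nat.ltb_spec k (S n)); [reflexivity|lia].
Qed.

Section Guessing.

(* Code [c] claims that the bits at positions [idx c 0], [idx c 1], ... are all true;
   if it is the first such code, the answer is [verdict c]. *)
Variable idx : nat -> nat -> nat.
Variable verdict : nat -> nat.

Definition refuted (l : list bool) (c : nat) : bool :=
  existsb (fun j => match nth_error l (idx c j) with Some false => true | _ => false end)
          (seq 0 (length l)).

Definition guess (l : list bool) : nat :=
  match find (fun c => negb (refuted l c)) (seq 0 (length l)) with
  | Some c => verdict c
  | None => 0
  end.

Lemma refuted_witness (b : nat -> bool) (n c j : nat) :
  j <= n -> idx c j <= n -> b (idx c j) = false -> refuted (prefix_bits b n) c = true.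
Proof.
  intros Hj Hk Hb. apply existsb_exists. exists j. split.
  - rewrite prefix_bits_length. apply in_seq. lia.
  - rewrite (prefix_bits_nth_error b n _ Hk), Hb. reflexivity.
Qed.

Lemma not_refuted (b : nat -> bool) (n c : nat) :
  (forall j, b (idx c j) = true) -> refuted (prefix_bits b n) c = false.
Proof.
  intros Hc. apply Bool.not_true_iff_false. intros Hr.
  apply existsb_exists in Hr. destruct Hr as [j [_ Hj]].
  destruct (Nat.le_gt_cases (idx c j) n) as [Hk|Hk].
  - rewrite (prefix_bits_nth_error b n _ Hk), Hc in Hj. discriminate.
  - rewrite (proj2 (nth_error_None _ _)) in Hj by (rewrite prefix_bits_length; lia).
    discriminate.
Qed.

(* If some code is never refuted, the guesses stabilise on the verdict of the least one:
   every smaller code is refuted by a finite prefix, and the least one never is. *)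
Lemma guess_limit (b : nat -> bool) :
  (exists c, forall j, b (idx c j) = true) ->
  exists c, (forall j, b (idx c j) = true) /\
            nat_limit (fun n => guess (prefix_bits b n)) (verdict c).
Proof.
  intros Hex. destruct (least_witness _ Hex) as [c [Hc Hleast]].
  destruct (common_bound c (fun c' N => exists j, j <= N /\ idx c' j <= N /\ b (idx c' j) = false))
    as [N HN].
  - intros c' x y Hxy [j [H1 [H2 H3]]]. exists j. repeat split; auto; lia.
  - intros c' Hc'. apply Hleast, not_all_ex_not in Hc'. destruct Hc' as [j Hj].
    exists (Nat.max j (idx c' j)), j.
    repeat split; [lia|lia|apply Bool.not_true_iff_false, Hj].
  - exists c. split; [exact Hc|]. exists (Nat.max N c). intros n Hn.
    unfold guess. rewrite prefix_bits_length, (find_seq_least _ (S n) 0 c); [reflexivity|lia| |].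
    + intros c' Hc'. destruct (HN c' (proj2 Hc')) as [j [Hj1 [Hj2 Hj3]]].
      apply Bool.negb_false_iff, (refuted_witness b n c' j); [lia|lia|exact Hj3].
    + apply Bool.negb_true_iff, not_refuted, Hc.
Qed.

End Guessing.

Definition admissible (m : nat) (Sg : symbol -> Prop) (A : formula) : Prop :=
  DeltaF m A /\ sentence A /\ formula_in Sg A.

Lemma listing_of_enumerable {A : Type} (P : A -> Prop) (enum : nat -> A) (a0 : A) :
  (forall a, P a -> exists n, enum n = a) -> P a0 ->
  exists phi : nat -> A, (forall n, P (phi n)) /\ (forall a, P a -> exists n, phi n = a).
Proof.
  intros Henum H0.
  exists (fun n => if excluded_middle_informative (P (enum n)) then enum n else a0). split.
  - intros n. destruct (excluded_middle_informative _); auto.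
  - intros a Ha. destruct (Henum a Ha) as [n En]. exists n.
    destruct (excluded_middle_informative _) as [_|Hn]; [exact En|]. subst. contradiction.
Qed.

Lemma parity_code (s i : nat) : s < 2 -> (s + i * 2) mod 2 = s /\ (s + i * 2) / 2 = i.
Proof.
  intros Hs. rewrite Nat.Div0.mod_add, Nat.div_add, Nat.mod_small, Nat.div_small by lia.
  split; reflexivity.
Qed.

(* The core of the theorem: if [X] and its complement are both of the form
   U_i n_j C s i j (with s = 0, resp. 1) and each [C s i j] is defined by an admissible
   sentence, then [X] is guessable: the code [c = s + 2i] is refuted once some
   [th s i j] is seen false, and the guess is 1 iff the first unrefuted code is even. *)
Lemma guessable_of_codes (m : nat) (X : bset) (Gg : forall k, (Fin.t k -> nat) -> list nat -> nat)
  (th : nat -> nat -> nat -> formula) (C : nat -> nat -> nat -> bset) :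
  (forall s i j, admissible m (basic_symbols Gg) (th s i j)) ->
  (forall s i j f, models f (th s i j) <-> C s i j f) ->
  (forall f, X f <-> exists i, forall j, C 0 i j f) ->
  (forall f, ~ X f <-> exists i, forall j, C 1 i j f) ->
  guessable m X.
Proof.
  intros Hth HC HX HnX.
  destruct (listing_of_enumerable (admissible m (basic_symbols Gg)) (enum_formula Gg)
              (th 0 0 0)) as [phi [Hphi Hlist]].
  { intros A HA. apply enum_formula_surj, HA. }
  { apply Hth. }
  destruct (choice (fun (p : nat * nat) n => phi n = th (fst p mod 2) (fst p / 2) (snd p)))
    as [idx Hidx].
  { intros [c j]. apply Hlist, Hth. }
  set (verdict := fun c => if c mod 2 =? 0 then 1 else 0).
  exists (basic_symbols Gg), phi, (guess (fun c j => idx (c, j)) verdict).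
  split; [apply basic_symbols_countable|]. split; [exact Hphi|]. split.
  { intros A H1 H2 H3. apply Hlist. repeat split; assumption. }
  intros f b Hb.
  assert (Hbit : forall c j, b (idx (c, j)) = true <-> C (c mod 2) (c / 2) j f).
  { intros c j. rewrite Hb, (Hidx (c, j)). apply HC. }
  assert (Hcode : forall s i, s < 2 -> (forall j, C s i j f) ->
                   exists c, forall j, b (idx (c, j)) = true).
  { intros s i Hs Hi. exists (s + i * 2). intros j. apply Hbit.
    destruct (parity_code s i Hs) as [E1 E2]. rewrite E1, E2. apply Hi. }
  destruct (guess_limit (fun c j => idx (c, j)) verdict b) as [c [Hc Hlim]].
  - destruct (classic (X f)) as [Hf|Hf].
    + destruct (proj1 (HX f) Hf) as [i Hi]. exact (Hcode 0 i ltac:(lia) Hi).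
    + destruct (proj1 (HnX f) Hf) as [i Hi]. exact (Hcode 1 i ltac:(lia) Hi).
  - assert (Hcf : forall j, C (c mod 2) (c / 2) j f) by (intros j; apply Hbit, Hc).
    assert (Hparity : c mod 2 = 0 \/ c mod 2 = 1)
      by (pose proof (Nat.mod_upper_bound c 2); lia).
    unfold verdict in Hlim.
    destruct Hparity as [E|E]; rewrite E in Hlim, Hcf; simpl in Hlim; split; intros Hf.
    + exact Hlim.
    + exfalso. exact (Hf (proj2 (HX f) (ex_intro _ _ Hcf))).
    + exfalso. exact (proj2 (HnX f) (ex_intro _ _ Hcf) Hf).
    + exact Hlim.
Qed.

Lemma sigF_admissible (n : nat) (H H' : list nat -> list nat -> nat) (F : list nat -> bset)
  (pre : list nat) :
  Rep H n F -> Rep H' n (fun ctx => compl (F ctx)) ->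
  admissible (S n) (basic_symbols (Gfam H)) (sigF H n 0 pre).
Proof.
  intros HR HR'. split; [|split].
  - split.
    + exists (sigF H n 0 pre). split; [apply sigF_class|]. intros f env. reflexivity.
    + exists (piF H' n 0 pre). split; [apply sigF_class|]. intros f env.
      rewrite (proj1 (sigF_sat n H F HR 0 pre f env)),
              (proj2 (sigF_sat n H' _ HR' 0 pre f env)).
      unfold compl. split; [auto|apply NNPP].
  - intros x Hx. apply (proj1 (sigF_free H n 0 pre x)) in Hx. lia.
  - apply sigF_in.
Qed.

(* m = 0: [X] and its complement are countable unions of closed sets [K s i], and
   membership in [K s i] is the conjunction over [N] of the quantifier-free sentences
   "the cylinder of the prefix of length N+1 is not inside the complement of K s i". *)
Lemma guessable_Delta2 (X : bset) : BDelta 2 X -> guessable 0 X.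
Proof.
  intros [[A [HA HXA]] [B [HB HXB]]].
  set (K := fun s i => if s =? 0 then A i else B i).
  destruct (Rep_exists 0 (fun ctx => compl (K (nth 1 ctx 0) (nth 0 ctx 0)))) as [H [_ HH]].
  { intros ctx. simpl. unfold K. destruct (nth 1 ctx 0 =? 0); [apply HA|apply HB]. }
  assert (Hsimple : forall N, simple_term 0 (TConst N)) by (intros N; right; exists N; reflexivity).
  apply (guessable_of_codes 0 X (Gfam H)
           (fun s i N => FNot (atom H (ctx_terms 0 [i; s]) (TConst N)))
           (fun s i N f => ~ cyl (prefix f (S N)) (compl (K s i)))).
  - intros s i N. split; [exact I|split].
    + intros x Hx.
      exact (Nat.nlt_0_r x (atom_free H 0 _ _ (ctx_terms_simple 0 [i; s]) (Hsimple N) x Hx)).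
    + exact (atom_in H 0 _ _ (ctx_terms_simple 0 [i; s]) (Hsimple N)).
  - intros s i N f. unfold models. cbn [sat]. rewrite atom_sat, eval_ctx_terms, HH.
    reflexivity.
  - intros f. rewrite HXA.
    split; intros [i Hi]; exists i; apply (closed_cyl _ f (HA i)), Hi.
  - intros f. change (~ X f) with (compl X f). rewrite HXB.
    split; intros [i Hi]; exists i; apply (closed_cyl _ f (HB i)), Hi.
Qed.

(* m = n+1: [X] is U_i n_j A i j and its complement is U_i n_j compl (B i j) with
   Delta^0_(n+1) sets [A i j], [B i j]; each of these sets is defined by a
   sentence [sigF] with constant parameters [j; i; s]. *)
Lemma guessable_DeltaPrime_succ (n : nat) (X : bset) :
  DeltaPrime (3 + n) X -> guessable (S n) X.
Proof.
  intros [[A [HA HXA]] [B [HB HXB]]].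
  set (K := fun s i j => if s =? 0 then A i j else compl (B i j)).
  assert (HK : forall s i j, SigAux n (K s i j) /\ SigAux n (compl (K s i j))).
  { intros s i j. unfold K. destruct (s =? 0).
    - apply BDelta_succ, HA.
    - destruct (BDelta_succ _ _ (HB i j)) as [H1 H2]. split; [exact H2|].
      apply (SigAux_ext _ (B i j)); [|exact H1].
      intros x. unfold compl. split; [auto|apply NNPP]. }
  set (F := fun ctx => K (nth 2 ctx 0) (nth 1 ctx 0) (nth 0 ctx 0)).
  destruct (Rep_exists n F) as [H HR]; [intros ctx; apply HK|].
  destruct (Rep_exists n (fun ctx => compl (F ctx))) as [H' HR']; [intros ctx; apply HK|].
  apply (guessable_of_codes (S n) X (Gfam H) (fun s i j => sigF H n 0 [j; i; s]) K).
  - intros s i j. exact (sigF_admissible n H H' F [j; i; s] HR HR').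
  - intros s i j f. exact (proj1 (sigF_sat n H F HR 0 [j; i; s] f _)).
  - intros f. rewrite HXA. reflexivity.
  - intros f. rewrite HXB. split.
    + intros Hn. apply not_all_ex_not in Hn. destruct Hn as [i Hi].
      exists i. intros j Hj. apply Hi. exists j. exact Hj.
    + intros [i Hi] Hall. destruct (Hall i) as [j Hj]. exact (Hi j Hj).
Qed.

Theorem mainTheorem10 (m : nat) (S : bset) :
  DeltaPrime (m + 2) S -> guessable m S.
Proof.
  rewrite Nat.add_comm. destruct m as [|n].
  - apply guessable_Delta2.
  - apply guessable_DeltaPrime_succ.
Qed.
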